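(* Let $X$ be a Banach lattice and let $M$ and $N$ be nonzero Banach sublattices of $X$ such that $X=M\oplus_\infty N$ and the canonical projections from $X$ onto $M$ and onto $N$ are positive operators. Let $Y$ be a strictly monotone Banach lattice. If the pair $(X,Y)$ has the Bishop-Phelps-Bollobás property for positive operators, then $Y$ is uniformly monotone.
   Context: All spaces are real. $X=M\oplus_\infty N$ means every $x\in X$ decomposes uniquely as $x=m+n$ with $m\in M$, $n\in N$, and $\Vert x\Vert=\max\{\Vert m\Vert,\Vert n\Vert\}$. An operator is positive if it maps positive elements to positive elements. A Banach lattice $Y$ is strictly monotone if $x,y\ge0$ and $y\ne0$ imply $\Vert x+y\Vert>\Vert x\Vert$. A Banach lattice $E$ is uniformly monotone if for every $\varepsilon>0$ there is $\delta(\varepsilon)>0$ such that whenever $x\in E$ with $\Vert x\Vert=1$, $y\in E$, $x,y\ge0$, and $\Vert x+y\Vert\le 1+\delta(\varepsilon)$, then $\Vert y\Vert\le\varepsilon$. For a Banach space $X$, $S_X$ is its unit sphere and $L(X,Y)$ the space of bounded operators with operator norm. A pair $(X,Y)$ of Banach lattices has the Bishop-Phelps-Bollobás property for positive operators if for every $0<\varepsilon<1$ there exists $0<\eta(\varepsilon)<\varepsilon$ such that for every positive $S\in S_{L(X,Y)}$ and every $x_0\in S_X$ with $\Vert S(x_0)\Vert>1-\eta(\varepsilon)$, there exist $u_0\in S_X$ and a positive operator $T\in S_{L(X,Y)}$ with $\Vert T(u_0)\Vert=1$, $\Vert u_0-x_0\Vert<\varepsilon$ and $\Vert T-S\Vert<\varepsilon$.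 *)

From mathcomp Require Import all_boot all_order all_algebra.
From mathcomp Require Import all_classical all_reals all_analysis.
Set Implicit Arguments. Unset Strict Implicit. Unset Printing Implicit Defensive.
Import Order.TTheory GRing.Theory Num.Theory.
Import numFieldNormedType.Exports.
Local Open Scope classical_set_scope.
Local Open Scope ring_scope.

Section Defs.
Context {R : realType}.

Definition is_sup2 {V : Type} (le : V -> V -> Prop) (x y z : V) : Prop :=
  le x z /\ le y z /\ (forall w, le x w -> le y w -> le z w).

Definition is_banach_lattice (V : completeNormedModType R) (le : V -> V -> Prop) : Prop :=
  (forall x, le x x) /\
  (forall x y, le x y -> le y x -> x = y) /\
  (forall x y z, le x y -> le y z -> le x z) /\
  (forall x y z, le x y -> le (x + z) (y + z)) /\
  (forall (a : R) x y, 0 <= a -> le x y -> le (a *: x) (a *: y)) /\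
  (forall x y, exists z, is_sup2 le x y z) /\
  (forall x y ax ay, is_sup2 le x (- x) ax -> is_sup2 le y (- y) ay ->
     le ax ay -> `|x| <= `|y|).

Definition is_banach_sublattice (V : completeNormedModType R) (le : V -> V -> Prop)
  (M : set V) : Prop :=
  [/\ M 0,
      (forall x y, M x -> M y -> M (x + y)),
      (forall (a : R) x, M x -> M (a *: x)),
      (forall x y z, M x -> M y -> is_sup2 le x y z -> M z) &
      closed M].

Definition linfty_direct_sum (V : completeNormedModType R) (M N : set V) : Prop :=
  forall x : V,
    (exists m n, [/\ M m, N n & x = m + n]) /\
    (forall m n m' n', M m -> N n -> M m' -> N n' ->
        x = m + n -> x = m' + n' -> m = m' /\ n = n') /\
    (forall m n, M m -> N n -> x = m + n -> `|x| = Num.max `|m| `|n|).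

Definition positive_projections (V : completeNormedModType R) (le : V -> V -> Prop)
  (M N : set V) : Prop :=
  forall x m n, M m -> N n -> x = m + n -> le 0 x -> le 0 m /\ le 0 n.

Definition strictly_monotone (V : completeNormedModType R) (le : V -> V -> Prop) : Prop :=
  forall x y : V, le 0 x -> le 0 y -> y <> 0 -> `|x| < `|x + y|.

Definition uniformly_monotone (V : completeNormedModType R) (le : V -> V -> Prop) : Prop :=
  forall eps : R, 0 < eps -> exists delta : R, 0 < delta /\
    forall x y : V, `|x| = 1 -> le 0 x -> le 0 y -> `|x + y| <= 1 + delta ->
      `|y| <= eps.

Definition bounded_linear (X Y : completeNormedModType R) (T : X -> Y) : Prop :=
  (forall (a : R) x y, T (a *: x + y) = a *: T x + T y) /\
  (exists k : R, forall x, `|T x| <= k * `|x|).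

Definition opnorm (X Y : completeNormedModType R) (T : X -> Y) : R :=
  sup [set `|T x| | x in [set x : X | `|x| <= 1]].

Definition positive_op (X Y : completeNormedModType R)
  (leX : X -> X -> Prop) (leY : Y -> Y -> Prop) (T : X -> Y) : Prop :=
  forall x, leX 0 x -> leY 0 (T x).

Definition BPBp_positive (X Y : completeNormedModType R)
  (leX : X -> X -> Prop) (leY : Y -> Y -> Prop) : Prop :=
  forall eps : R, 0 < eps < 1 -> exists eta : R, 0 < eta < eps /\
    forall (S : X -> Y) (x0 : X),
      bounded_linear S -> positive_op leX leY S -> opnorm S = 1 ->
      `|x0| = 1 -> 1 - eta < `|S x0| ->
      exists (u0 : X) (T : X -> Y),
        `|u0| = 1 /\ bounded_linear T /\ positive_op leX leY T /\
        opnorm T = 1 /\ `|T u0| = 1 /\ `|u0 - x0| < eps /\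
        opnorm (fun x => T x - S x) < eps.

End Defs.

From mathcomp Require Import all_boot all_order all_algebra.
From mathcomp Require Import all_classical all_reals all_analysis.
From mathcomp Require Import ring lra.
Import Order.TTheory GRing.Theory Num.Theory.
Import numFieldNormedType.Exports.
Set Implicit Arguments. Unset Strict Implicit. Unset Printing Implicit Defensive.
Local Open Scope classical_set_scope.
Local Open Scope ring_scope.

(* Suppose Y is not uniformly monotone: then there are a, b >= 0 in Y with
   ||a + b|| = 1, ||a|| > 1 - eta and ||b|| >= eps, for eps fixed and eta
   arbitrarily small.  Take positive unit vectors m0 in M and n0 in N and, by
   Hahn-Banach, positive norming functionals f, g of norm one; the positive
   operator S z = f (P_M z) a + g (P_N z) b has norm one, almost attains it at
   m0 and maps n0 to b.  Let T, u0 be given by the BPB property.  Writing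
   u0 = m1 + n1 with m1 in M and n1 in N, we have ||n1|| < eps, and
   v = |m1| + |n1| + (1 - eps) n0 lies in the unit ball of M (+)_oo N.  Since
   T n0 is close to b, it is nonzero, so strict monotonicity of Y gives
   1 = ||T u0|| <= ||T (|m1| + |n1|)|| < ||T v|| <= 1. *)

Section LinearMaps.
Variables (R : pzRingType) (U W : lmodType R) (f : U -> W).
Hypothesis f_lin : linear f.

Lemma linD x y : f (x + y) = f x + f y.
Proof. by have := f_lin 1 x y; rewrite !scale1r. Qed.

Lemma lin0 : f 0 = 0.
Proof. by apply: (addrI (f 0)); rewrite -linD !addr0. Qed.

Lemma linZ a x : f (a *: x) = a *: f x.
Proof. by have := f_lin a x 0; rewrite !addr0 lin0 addr0. Qed.

Lemma linN x : f (- x) = - f x.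
Proof. by rewrite -scaleN1r linZ scaleN1r. Qed.

Lemma linB x y : f (x - y) = f x - f y.
Proof. by rewrite linD linN. Qed.

End LinearMaps.

Section BanachLattice.
Variables (R : realType) (V : completeNormedModType R) (le : V -> V -> Prop).
Hypothesis HL : is_banach_lattice le.

Lemma bl_refl x : le x x.
Proof. by case: HL. Qed.

Lemma bl_anti x y : le x y -> le y x -> x = y.
Proof. by case: HL => _ [h _]; apply: h. Qed.

Lemma bl_trans x y z : le x y -> le y z -> le x z.
Proof. by case: HL => _ [_ [h _]]; apply: h. Qed.

Lemma bl_addr x y z : le x y -> le (x + z) (y + z).
Proof. by case: HL => _ [_ [_ [h _]]]; apply: h. Qed.

Lemma bl_scale (a : R) x y : 0 <= a -> le x y -> le (a *: x) (a *: y).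
Proof. by case: HL => _ [_ [_ [_ [h _]]]]; apply: h. Qed.

Lemma bl_sup2 x y : exists z, is_sup2 le x y z.
Proof. by case: HL => _ [_ [_ [_ [_ [h _]]]]]; apply: h. Qed.

Lemma bl_norm_abs x y ax ay : is_sup2 le x (- x) ax -> is_sup2 le y (- y) ay ->
  le ax ay -> `|x| <= `|y|.
Proof. by case: HL => _ [_ [_ [_ [_ [_ h]]]]]; apply: h. Qed.

Lemma bl_subr_ge0 x y : le 0 (y - x) <-> le x y.
Proof.
split=> [/(bl_addr x)|/(bl_addr (- x))]; first by rewrite add0r subrK.
by rewrite subrr.
Qed.

Lemma bl_add a b c d : le a b -> le c d -> le (a + c) (b + d).
Proof.
move=> /(bl_addr c) ac /(bl_addr b) cd; apply: bl_trans ac _.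
by rewrite addrC [b + d]addrC.
Qed.

Lemma bl_add_ge0 x y : le 0 x -> le 0 y -> le 0 (x + y).
Proof. by rewrite -{3}[0]addr0; apply: bl_add. Qed.

Lemma bl_opp x y : le x y -> le (- y) (- x).
Proof. by move=> /bl_subr_ge0 h; apply/bl_subr_ge0; rewrite opprK addrC. Qed.

Lemma bl_le_addr x y : le 0 y -> le x (x + y).
Proof. by move=> /(bl_add (bl_refl x)); rewrite addr0. Qed.

Lemma bl_scale_ge0 (a : R) x : 0 <= a -> le 0 x -> le 0 (a *: x).
Proof. by move=> a0 /(bl_scale a0); rewrite scaler0. Qed.

Lemma sup2_uniq x y a b : is_sup2 le x y a -> is_sup2 le x y b -> a = b.
Proof. by move=> [xa [ya a_min]] [xb [yb b_min]]; apply: bl_anti; auto. Qed.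

Definition absv x := sval (cid (bl_sup2 x (- x))).

Lemma absv_sup x : is_sup2 le x (- x) (absv x).
Proof. exact: svalP (cid (bl_sup2 x (- x))). Qed.

Lemma absv_ge x : le x (absv x).
Proof. by case: (absv_sup x). Qed.

Lemma absv_geN x : le (- x) (absv x).
Proof. by case: (absv_sup x) => _ []. Qed.

Lemma absv_le x w : le x w -> le (- x) w -> le (absv x) w.
Proof. by case: (absv_sup x) => _ [_]; apply. Qed.

Lemma absv_ge0 x : le 0 (absv x).
Proof.
have := bl_add (absv_ge x) (absv_geN x); rewrite subrr.
have half0 : (0 : R) <= 2^-1 by rewrite invr_ge0 ler0n.
move=> /(bl_scale_ge0 half0); rewrite scalerDr -scalerDl.
by rewrite -[2^-1]mul1r -splitr scale1r.
Qed.

Lemma sup2_ge0 x : le 0 x -> is_sup2 le x (- x) x.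
Proof.
move=> x0; split; first exact: bl_refl.
by split=> //; apply: bl_trans (bl_opp x0) _; rewrite oppr0.
Qed.

Lemma bl_norm_mono x y : le 0 x -> le x y -> `|x| <= `|y|.
Proof.
by move=> x0 xy; apply: bl_norm_abs (sup2_ge0 x0) (sup2_ge0 (bl_trans x0 xy)) xy.
Qed.

Lemma norm_absv x : `|absv x| = `|x|.
Proof.
have abs0 := sup2_ge0 (absv_ge0 x).
apply/le_anti/andP; split; last exact: bl_norm_abs (absv_sup x) abs0 (bl_refl _).
exact: bl_norm_abs abs0 (absv_sup x) (bl_refl _).
Qed.

Lemma bl_norm_le x w : le x w -> le (- x) w -> `|x| <= `|w|.
Proof.
move=> xw Nxw; rewrite -norm_absv.
exact: bl_norm_mono (absv_ge0 x) (absv_le xw Nxw).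
Qed.

Lemma bl_norm_comb_le (a b : V) (s t : R) : le 0 a -> le 0 b ->
  `|s| <= 1 -> `|t| <= 1 -> `|s *: a + t *: b| <= `|a + b|.
Proof.
move=> a0 b0; have comb_le (s' t' : R) : `|s'| <= 1 -> `|t'| <= 1 ->
    le (s' *: a + t' *: b) (a + b).
  move=> /ler_normlP[_ s1] /ler_normlP[_ t1]; apply/bl_subr_ge0.
  have -> : a + b - (s' *: a + t' *: b) = (1 - s') *: a + (1 - t') *: b.
    by rewrite !scalerBl !scale1r opprD addrACA.
  by apply: bl_add_ge0; apply: bl_scale_ge0; rewrite // subr_ge0.
move=> s1 t1; apply: bl_norm_le; first exact: comb_le.
by rewrite opprD -!scaleNr; apply: comb_le; rewrite normrN.
Qed.

Definition posp x := sval (cid (bl_sup2 x 0)).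

Lemma posp_sup x : is_sup2 le x 0 (posp x).
Proof. exact: svalP (cid (bl_sup2 x 0)). Qed.

Lemma posp_ge0 x : le 0 (posp x).
Proof. by case: (posp_sup x) => _ []. Qed.

Lemma posp_id x : le 0 x -> posp x = x.
Proof.
by move=> x0; apply: sup2_uniq (posp_sup x) _; do !split=> //; apply: bl_refl.
Qed.

Lemma posp_eq0 x : le x 0 -> posp x = 0.
Proof.
by move=> x0; apply: sup2_uniq (posp_sup x) _; do !split=> //; apply: bl_refl.
Qed.

Lemma posp_le_absv x : le (posp x) (absv x).
Proof. by case: (posp_sup x) => _ [_]; apply; [apply: absv_ge|apply: absv_ge0]. Qed.

Lemma posp_add_le x y : le (posp (x + y)) (posp x + posp y).
Proof.
case: (posp_sup (x + y)) => _ [_]; apply; last exact: bl_add_ge0 (posp_ge0 _) (posp_ge0 _).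
by apply: bl_add; [case: (posp_sup x)|case: (posp_sup y)].
Qed.

Lemma posp_scale (t : R) x : 0 < t -> posp (t *: x) = t *: posp x.
Proof.
move=> t_gt0; have t_ge0 : 0 <= t by exact: ltW.
have ti_ge0 : 0 <= t^-1 by rewrite invr_ge0.
apply: sup2_uniq (posp_sup _) _; split.
  by apply: bl_scale t_ge0 _; case: (posp_sup x).
split; first exact: bl_scale_ge0 t_ge0 (posp_ge0 x).
move=> w txw w0; rewrite -[w](scalerKV (lt0r_neq0 t_gt0)); apply: bl_scale t_ge0 _.
case: (posp_sup x) => _ [_]; apply; last exact: bl_scale_ge0.
by rewrite -[x](scalerK (lt0r_neq0 t_gt0)); apply: bl_scale.
Qed.

(* Linear functionals below the sublinear map x |-> ||x^+|| are positive and
   contractive; this is how Hahn-Banach produces positive norming functionals. *)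
Definition pnorm x := `|posp x|.

Lemma pnorm_subadd x y : pnorm (x + y) <= pnorm x + pnorm y.
Proof.
apply: le_trans (ler_normD _ _).
exact: bl_norm_mono (posp_ge0 _) (posp_add_le x y).
Qed.

Lemma pnorm_homo t x : 0 < t -> pnorm (t *: x) = t * pnorm x.
Proof. by move=> t0; rewrite /pnorm posp_scale // normrZ gtr0_norm. Qed.

Lemma pnorm_le_norm x : pnorm x <= `|x|.
Proof. by rewrite -norm_absv; apply: bl_norm_mono (posp_ge0 x) (posp_le_absv x). Qed.

Lemma pnorm_pos x : le 0 x -> pnorm x = `|x|.
Proof. by move=> x0; rewrite /pnorm posp_id. Qed.

Lemma pnorm_neg x : le x 0 -> pnorm x = 0.
Proof. by move=> x0; rewrite /pnorm posp_eq0 ?normr0. Qed.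

End BanachLattice.

Section HahnBanach.
Variables (R : realType) (V : lmodType R) (p : V -> R).
Hypothesis p_subadd : forall x y, p (x + y) <= p x + p y.
Hypothesis p_homo : forall t x, 0 < t -> p (t *: x) = t * p x.

Lemma sublinear0 : p 0 = 0.
Proof. by have := p_homo 0 (ltr0n R 2); rewrite scaler0; lra. Qed.

Lemma sublinear_scale_ge t x : t * p x <= p (t *: x).
Proof.
case: (ltgtP t 0) => [t0|t0|->]; last by rewrite mul0r scale0r sublinear0.
- have := p_subadd (t *: x) ((- t) *: x).
  rewrite -scalerDl subrr scale0r sublinear0 (p_homo x (_ : 0 < - t)) ?oppr_gt0 //.
  by rewrite mulNr; lra.
- by rewrite p_homo.
Qed.

Definition dominated_linear_graph (G : set (V * R)) := [/\
  forall a x r y s, G (x, r) -> G (y, s) -> G (a *: x + y, a * r + s),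
  forall x r s, G (x, r) -> G (x, s) -> r = s &
  forall x r, G (x, r) -> r <= p x].

Lemma dominated_graph_bigcup (F : set (set (V * R))) :
  (forall G, F G -> dominated_linear_graph G) -> total_on F subset ->
  dominated_linear_graph (\bigcup_(G in F) G).
Proof.
move=> Fdom Ftot.
have common u v : (\bigcup_(G in F) G) u -> (\bigcup_(G in F) G) v ->
    exists2 G, F G & G u /\ G v.
  move=> [G1 FG1 G1u] [G2 FG2 G2v].
  by case: (Ftot _ _ FG1 FG2) => [G12|G21]; [exists G2|exists G1]; auto.
split.
- move=> a x r y s Ux Uy; have [G FG [Gx Gy]] := common _ _ Ux Uy.
  by exists G => //; case: (Fdom _ FG) => G_lin _ _; apply: G_lin.
- move=> x r s Ux Uy; have [G FG [Gx Gy]] := common _ _ Ux Uy.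
  by case: (Fdom _ FG) => _ G_fun _; apply: G_fun Gx Gy.
- by move=> x r [G FG Gx]; case: (Fdom _ FG) => _ _; apply.
Qed.

Lemma dominated_graph_line x0 :
  dominated_linear_graph (range (fun t => (t *: x0, t * p x0))).
Proof.
split.
- move=> a _ _ _ _ [t1 _ [<- <-]] [t2 _ [<- <-]]; exists (a * t1 + t2) => //.
  by rewrite scalerDl scalerA mulrDl mulrA.
- move=> x _ _ [t1 _ [<- <-]] [t2 _ [t12 <-]].
  have [<-//|t12'] := eqVneq t1 t2.
  suff -> : x0 = 0 by rewrite sublinear0 !mulr0.
  have : (t1 - t2) *: x0 = 0 by rewrite scalerBl t12 subrr.
  by move/eqP; rewrite scaler_eq0 subr_eq0 (negbTE t12') => /eqP.
- by move=> _ _ [t _ [<- <-]]; apply: sublinear_scale_ge.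
Qed.

Section Extension.
Variable A : set (V * R).
Hypothesis A_dom : dominated_linear_graph A.
Hypothesis A0 : A (0, 0).

Lemma dominated_graph_scale a x r : A (x, r) -> A (a *: x, a * r).
Proof.
by case: A_dom => A_lin _ _ Ax; have := A_lin a _ _ _ _ Ax A0; rewrite !addr0.
Qed.

Lemma dominated_graph_gap x1 : exists c : R,
  (forall y r, A (y, r) -> r - p (y - x1) <= c) /\
  (forall y r, A (y, r) -> c <= p (y + x1) - r).
Proof.
case: A_dom => A_lin _ A_le.
have gap y r y' r' : A (y, r) -> A (y', r') -> r - p (y - x1) <= p (y' + x1) - r'.
  move=> Ay Ay'; have := A_le _ _ (A_lin 1 _ _ _ _ Ay Ay'); rewrite scale1r mul1r.
  have := p_subadd (y - x1) (y' + x1); rewrite addrA addrAC subrK; lra.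
pose E := [set z | exists y r, A (y, r) /\ z = r - p (y - x1)].
exists (sup E); split.
  move=> y r Ay; apply: ub_le_sup; last by exists y, r.
  by exists (p (0 + x1) - 0) => _ [y' [r' [Ay' ->]]]; apply: gap.
move=> y r Ay; apply: ge_sup; first by exists (0 - p (0 - x1)), 0, 0.
by move=> _ [y' [r' [Ay' ->]]]; apply: gap.
Qed.

Lemma dominated_graph_shift_le x1 c y r t :
  (forall y r, A (y, r) -> c <= p (y + x1) - r) ->
  0 < t -> A (y, r) -> r + t * c <= p (y + t *: x1).
Proof.
move=> c_le t0 Ay; have := c_le _ _ (dominated_graph_scale t^-1 Ay).
move=> /(ler_wpM2l (ltW t0)); rewrite mulrBr mulrA mulfV ?gt_eqF // mul1r.
by rewrite -p_homo // scalerDr scalerA mulfV ?gt_eqF // scale1r; lra.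
Qed.

Lemma dominated_graph_extend x1 : ~ (exists r, A (x1, r)) ->
  exists2 B, dominated_linear_graph B & A `<` B.
Proof.
move=> x1_notin; have [c [c_ge c_le]] := dominated_graph_gap x1.
pose B := [set w | exists y r t, A (y, r) /\ w = (y + t *: x1, r + t * c)].
have AB : A `<=` B by case=> y r Ay; exists y, r, 0; rewrite scale0r mul0r !addr0.
have Bx1 : B (x1, c) by exists 0, 0, 1; rewrite scale1r mul1r !add0r.
exists B; last by split=> // BA; apply: x1_notin; exists c; apply: BA.
case: A_dom => A_lin A_fun _; split.
- move=> a _ _ _ _ [y1 [r1 [t1 [Ay1 [-> ->]]]]] [y2 [r2 [t2 [Ay2 [-> ->]]]]].
  exists (a *: y1 + y2), (a * r1 + r2), (a * t1 + t2); split; first exact: A_lin.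
  congr (_, _); last by ring.
  by rewrite scalerDr scalerA scalerDl addrACA.
- move=> _ _ _ [y1 [r1 [t1 [Ay1 [-> ->]]]]] [y2 [r2 [t2 [Ay2 [e ->]]]]].
  have [t12|t12] := eqVneq t1 t2.
    move: e; rewrite t12 => /addIr y12; rewrite y12 in Ay1.
    by rewrite (A_fun _ _ _ Ay1 Ay2).
  exfalso; apply: x1_notin; exists ((t1 - t2)^-1 * (r2 - r1)).
  have -> : x1 = (t1 - t2)^-1 *: (y2 - y1).
    rewrite -[LHS](scalerK (_ : t1 - t2 != 0)) ?subr_eq0 //; congr (_ *: _).
    by rewrite scalerBl; apply/eqP; rewrite subr_eq addrAC -e addrAC subrr add0r.
  apply: dominated_graph_scale.
  have := A_lin (-1) _ _ _ _ Ay1 Ay2.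
  by rewrite scaleN1r mulN1r addrC [- r1 + _]addrC.
- move=> _ _ [y [r [t [Ay [-> ->]]]]].
  case: (ltgtP t 0) => [t0|t0|->].
  + (* the same estimate, applied to -x1 and -c *)
    have c_le' y' r' : A (y', r') -> - c <= p (y' + - x1) - r'.
      by move=> Ay'; have := c_ge _ _ Ay'; lra.
    have := dominated_graph_shift_le c_le' (_ : 0 < - t) Ay.
    by rewrite scalerN scaleNr opprK mulNr mulrN opprK; apply; rewrite oppr_gt0.
  + exact: dominated_graph_shift_le.
  + by rewrite scale0r mul0r !addr0; case: A_dom => _ _; apply.
Qed.

End Extension.

Theorem hahn_banach x0 : exists f : V -> R,
  [/\ linear (f : V -> R^o), forall x, f x <= p x & f x0 = p x0].
Proof.
(* The empty graph is the union of the empty chain, so it must be admitted;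
   nonempty admissible graphs contain the seed (x0, p x0). *)
pose P G := dominated_linear_graph G /\ (G !=set0 -> G (x0, p x0)).
have [A [[A_dom Ax0] A_max]] : exists A, P A /\ forall B, A `<` B -> ~ P B.
  apply: Zorn_bigcup => F FP Ftot; split.
    by apply: dominated_graph_bigcup => // G /FP[].
  by move=> [u [G FG Gu]]; exists G => //; apply: (FP _ FG).2; exists u.
have A_line : A (x0, p x0).
  pose L := range (fun t => (t *: x0, t * p x0)).
  have Lx0 : L (x0, p x0) by exists 1; rewrite ?scale1r ?mul1r.
  apply: Ax0; apply: contrapT => /set0P/negP/negPn/eqP A0.
  apply: (A_max L); last by split=> [|_]; [exact: dominated_graph_line|exact: Lx0].
  by rewrite A0; split=> // /(_ _ Lx0).
have A0 : A (0, 0).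
  case: A_dom => A_lin _ _; have := A_lin (-1) _ _ _ _ A_line A_line.
  by rewrite scaleN1r mulN1r !addNr.
have A_total x : exists r, A (x, r).
  apply: contrapT => /(dominated_graph_extend A_dom A0)[B B_dom AB].
  apply: (A_max _ AB); split=> // _; apply: (proj1 AB); exact: A_line.
have [f Af] := choice A_total; case: A_dom => A_lin A_fun A_le.
exists f; split => [a x y||]; last exact: A_fun (Af x0) A_line.
  exact: A_fun (Af _) (A_lin _ _ _ _ _ (Af x) (Af y)).
by move=> x; apply: A_le.
Qed.

End HahnBanach.

Definition positive_contraction (R : realType) (V : completeNormedModType R)
    (le : V -> V -> Prop) (f : V -> R) :=
  [/\ linear (f : V -> R^o), forall x, le 0 x -> 0 <= f x & forall x, `|f x| <= `|x|].

Lemma positive_norming_functional (R : realType) (V : completeNormedModType R)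
    (le : V -> V -> Prop) (z0 : V) :
  is_banach_lattice le -> le 0 z0 ->
  exists2 f, positive_contraction le f & f z0 = `|z0|.
Proof.
move=> HL z0_ge0.
have [f [f_lin f_le fz0]] := hahn_banach (pnorm_subadd HL) (pnorm_homo HL) z0.
exists f; last by rewrite fz0 pnorm_pos.
split=> // [x x_ge0|x].
  have := f_le (- x); rewrite (linN f_lin) pnorm_neg ?oppr_le0 //.
  by have := bl_opp HL x_ge0; rewrite oppr0.
rewrite ler_norml (le_trans (f_le x)) ?pnorm_le_norm // andbT.
by rewrite lerNl -(linN f_lin) -(normrN x) (le_trans (f_le _)) ?pnorm_le_norm.
Qed.

Section Sublattice.
Variables (R : realType) (X : completeNormedModType R) (le : X -> X -> Prop) (M : set X).
Hypothesis HM : is_banach_sublattice le M.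

Lemma sublat0 : M 0.
Proof. by case: HM. Qed.

Lemma sublatD x y : M x -> M y -> M (x + y).
Proof. by case: HM => _ h _ _ _; apply: h. Qed.

Lemma sublatZ a x : M x -> M (a *: x).
Proof. by case: HM => _ _ h _ _; apply: h. Qed.

Lemma sublatN x : M x -> M (- x).
Proof. by rewrite -scaleN1r; apply: sublatZ. Qed.

Lemma sublatB x y : M x -> M y -> M (x - y).
Proof. by move=> Mx /sublatN; apply: sublatD. Qed.

Lemma sublat_absv (HL : is_banach_lattice le) x : M x -> M (absv HL x).
Proof. by case: HM => _ _ _ h _ Mx; apply: h Mx (sublatN Mx) (absv_sup HL x). Qed.

Lemma sublat_unit_ge0 (HL : is_banach_lattice le) x : M x -> x <> 0 ->
  exists z, [/\ M z, le 0 z & `|z| = 1].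
Proof.
move=> Mx x_neq0.
have ax_gt0 : 0 < `|absv HL x| by rewrite norm_absv normr_gt0; apply/eqP.
exists (`|absv HL x|^-1 *: absv HL x); split.
- exact/sublatZ/sublat_absv.
- by apply: (bl_scale_ge0 HL) (absv_ge0 HL x); rewrite invr_ge0 ltW.
- by rewrite normrZ normfV normr_id mulVf ?gt_eqF.
Qed.

End Sublattice.

Section DirectSum.
Variables (R : realType) (X : completeNormedModType R) (M N : set X).
Hypothesis LD : linfty_direct_sum M N.

Lemma decomp_ex x : exists mn : X * X, [/\ M mn.1, N mn.2 & x = mn.1 + mn.2].
Proof. by case: (LD x) => [[m [n [Mm Nn ->]]] _]; exists (m, n). Qed.

Definition projM x := (sval (cid (decomp_ex x))).1.
Definition projN x := (sval (cid (decomp_ex x))).2.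

Lemma proj_spec x : [/\ M (projM x), N (projN x) & x = projM x + projN x].
Proof. exact: svalP (cid (decomp_ex x)). Qed.

Lemma proj_uniq x m n : M m -> N n -> x = m + n -> projM x = m /\ projN x = n.
Proof.
move=> Mm Nn e; case: (proj_spec x) => Mx Nx ex.
by case: (LD x) => _ [uniq _]; apply: uniq.
Qed.

Lemma norm_decomp m n : M m -> N n -> `|m + n| = Num.max `|m| `|n|.
Proof. by move=> Mm Nn; case: (LD (m + n)) => _ [_]; apply. Qed.

Lemma norm_projM_le x : `|projM x| <= `|x|.
Proof. by case: (proj_spec x) => Mx Nx {2}->; rewrite norm_decomp // le_max lexx. Qed.

Lemma norm_projN_le x : `|projN x| <= `|x|.
Proof. by case: (proj_spec x) => Mx Nx {2}->; rewrite norm_decomp // le_max lexx orbT. Qed.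

Variable le : X -> X -> Prop.
Hypotheses (HM : is_banach_sublattice le M) (HN : is_banach_sublattice le N).

Lemma proj_linear a x y : projM (a *: x + y) = a *: projM x + projM y /\
  projN (a *: x + y) = a *: projN x + projN y.
Proof.
case: (proj_spec x) => Mx Nx ex; case: (proj_spec y) => My Ny ey.
apply: proj_uniq.
- exact: (sublatD HM (sublatZ HM a Mx) My).
- exact: (sublatD HN (sublatZ HN a Nx) Ny).
- by rewrite {1}ex {1}ey scalerDr addrACA.
Qed.

Lemma positive_contraction_proj (f : X -> R) :
  positive_projections le M N -> positive_contraction le f ->
  positive_contraction le (f \o projM) /\ positive_contraction le (f \o projN).
Proof.
move=> PP [f_lin f_ge0 f_le]; split; split=> [a x y|x x_ge0|x] /=.
- by rewrite (proj_linear a x y).1 f_lin.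
- by case: (proj_spec x) => Mx Nx ex; apply/f_ge0/(PP x _ _ Mx Nx ex x_ge0).1.
- exact: le_trans (f_le _) (norm_projM_le x).
- by rewrite (proj_linear a x y).2 f_lin.
- by case: (proj_spec x) => Mx Nx ex; apply/f_ge0/(PP x _ _ Mx Nx ex x_ge0).2.
- exact: le_trans (f_le _) (norm_projN_le x).
Qed.

End DirectSum.

Section Operators.
Variables (R : realType) (X Y : completeNormedModType R).

Lemma opnorm_ub (U : X -> Y) z : bounded_linear U -> `|z| <= 1 -> `|U z| <= opnorm U.
Proof.
move=> [_ [k Uk]] z1; apply: ub_le_sup; last by exists z.
exists `|k| => _ [z' z'1 <-]; apply: le_trans (Uk z') _.
by rewrite (le_trans (ler_wpM2r (normr_ge0 z') (ler_norm k))) // ler_piMr.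
Qed.

Lemma opnorm_le (U : X -> Y) c : (forall z, `|z| <= 1 -> `|U z| <= c) -> opnorm U <= c.
Proof.
move=> Uc; apply: ge_sup; first by exists `|U 0|, 0; rewrite //= normr0.
by move=> _ [z z1 <-]; apply: Uc.
Qed.

Lemma bounded_linearB (T S : X -> Y) : bounded_linear T -> bounded_linear S ->
  bounded_linear (fun x => T x - S x).
Proof.
move=> [T_lin [kT Tk]] [S_lin [kS Sk]]; split=> [a x y|].
  by rewrite T_lin S_lin scalerBr opprD addrACA.
by exists (kT + kS) => x; rewrite mulrDl (le_trans (ler_normB _ _)) // lerD.
Qed.

End Operators.

Section PositiveOperators.
Variables (R : realType) (X Y : completeNormedModType R).
Variables (leX : X -> X -> Prop) (leY : Y -> Y -> Prop).
Hypotheses (HX : is_banach_lattice leX) (HY : is_banach_lattice leY).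

Lemma positive_op_norm_le (T : X -> Y) u w : linear T -> positive_op leX leY T ->
  leX u w -> leX (- u) w -> `|T u| <= `|T w|.
Proof.
move=> T_lin T_pos uw Nuw; apply: (bl_norm_le HY); apply/(bl_subr_ge0 HY).
  by rewrite -(linB T_lin); apply/T_pos/(bl_subr_ge0 HX).
by rewrite -(linN T_lin) -(linB T_lin); apply/T_pos/(bl_subr_ge0 HX).
Qed.

Definition rank_two_op (F G : X -> R) (a b : Y) z := F z *: a + G z *: b.

Lemma rank_two_op_props F G a b :
  positive_contraction leX F -> positive_contraction leX G -> leY 0 a -> leY 0 b ->
  [/\ bounded_linear (rank_two_op F G a b), positive_op leX leY (rank_two_op F G a b)
    & opnorm (rank_two_op F G a b) <= `|a + b|].
Proof.
move=> [F_lin F_ge0 F_le] [G_lin G_ge0 G_le] a_ge0 b_ge0; split.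
- split=> [c x y|].
    by rewrite /rank_two_op F_lin G_lin !scalerDl scalerDr !scalerA addrACA.
  exists (`|a| + `|b|) => z; rewrite (le_trans (ler_normD _ _)) // !normrZ mulrDl.
  by rewrite lerD // [_ * `|z|]mulrC ler_wpM2r.
- move=> z z_ge0; apply: (bl_add_ge0 HY).
    exact: (bl_scale_ge0 HY (F_ge0 _ z_ge0) a_ge0).
  exact: (bl_scale_ge0 HY (G_ge0 _ z_ge0) b_ge0).
- apply: opnorm_le => z z1.
  exact: (bl_norm_comb_le HY a_ge0 b_ge0 (le_trans (F_le z) z1) (le_trans (G_le z) z1)).
Qed.

End PositiveOperators.

Lemma not_uniformly_monotone_gap (R : realType) (Y : completeNormedModType R)
    (leY : Y -> Y -> Prop) :
  ~ uniformly_monotone leY -> exists2 e : R, 0 < e & forall d, 0 < d ->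
    exists x y, [/\ `|x| = 1, leY 0 x, leY 0 y, `|x + y| <= 1 + d & e < `|y|].
Proof.
move=> notUM; apply: contrapT => noe; apply: notUM => e e_gt0.
apply: contrapT => nod; apply: noe; exists e => // d d_gt0.
apply: contrapT => noxy; apply: nod; exists d; split=> // x y x1 x_ge0 y_ge0 xy.
by rewrite leNgt; apply/negP => ey; apply: noxy; exists x, y.
Qed.

Lemma not_uniformly_monotone_witness (R : realType) (Y : completeNormedModType R)
    (leY : Y -> Y -> Prop) :
  is_banach_lattice leY -> ~ uniformly_monotone leY ->
  exists2 eps : R, 0 < eps < 1 & forall eta, 0 < eta < eps -> exists a b,
    [/\ leY 0 a, leY 0 b, `|a + b| = 1, 1 - eta < `|a| & eps <= `|b|].
Proof.
move=> HY /not_uniformly_monotone_gap[e e_gt0 gap].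
have eps_gt0 : 0 < Num.min (e / 2) (1 / 2) by rewrite lt_min; apply/andP; split; lra.
have eps_le : Num.min (e / 2) (1 / 2) <= e / 2 /\ Num.min (e / 2) (1 / 2) <= 1 / 2.
  by rewrite !ge_min !lexx orbT.
exists (Num.min (e / 2) (1 / 2)); first by apply/andP; split; lra.
move=> eta /andP[eta_gt0 eta_lt].
have [x [y [x1 x_ge0 y_ge0 xy_le ey]]] := gap eta eta_gt0.
have k_ge1 : 1 <= `|x + y| by rewrite -x1 (bl_norm_mono HY x_ge0 (bl_le_addr HY x y_ge0)).
have k_gt0 : 0 < `|x + y| by lra.
have ki_gt0 : 0 < `|x + y|^-1 by rewrite invr_gt0.
have kk : `|x + y| * `|x + y|^-1 = 1 by rewrite mulfV ?gt_eqF.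
exists (`|x + y|^-1 *: x), (`|x + y|^-1 *: y); split.
- exact: (bl_scale_ge0 HY (ltW ki_gt0) x_ge0).
- exact: (bl_scale_ge0 HY (ltW ki_gt0) y_ge0).
- by rewrite -scalerDr normrZ normfV normr_id mulVf ?gt_eqF.
- by rewrite normrZ x1 mulr1 gtr0_norm //; nra.
- by rewrite normrZ gtr0_norm //; nra.
Qed.

Section UniformMonotonicity.
Variables (R : realType) (X : completeNormedModType R) (leX : X -> X -> Prop).
Variables (M N : set X) (Y : completeNormedModType R) (leY : Y -> Y -> Prop).
Hypotheses (HX : is_banach_lattice leX) (HY : is_banach_lattice leY).
Hypotheses (HM : is_banach_sublattice leX M) (HN : is_banach_sublattice leX N).
Hypotheses (LD : linfty_direct_sum M N) (PP : positive_projections leX M N).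
Hypothesis SMY : strictly_monotone leY.

Lemma exists_norm_one_positive_op m0 n0 a b :
  M m0 -> N n0 -> leX 0 m0 -> leX 0 n0 -> `|m0| = 1 -> `|n0| = 1 ->
  leY 0 a -> leY 0 b -> `|a + b| = 1 ->
  exists S, [/\ bounded_linear S, positive_op leX leY S, opnorm S = 1, S m0 = a & S n0 = b].
Proof.
move=> Mm0 Nn0 m0_ge0 n0_ge0 m0_1 n0_1 a_ge0 b_ge0 ab_1.
have [f f_pc fm0] := positive_norming_functional HX m0_ge0.
have [g g_pc gn0] := positive_norming_functional HX n0_ge0.
have [F_pc _] := positive_contraction_proj LD HM HN PP f_pc.
have [_ G_pc] := positive_contraction_proj LD HM HN PP g_pc.
have [S_bl S_pos S_le] := rank_two_op_props HY F_pc G_pc a_ge0 b_ge0.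
have f0 : f 0 = 0 by case: f_pc => f_lin _ _; apply: (lin0 f_lin).
have g0 : g 0 = 0 by case: g_pc => g_lin _ _; apply: (lin0 g_lin).
have [PMm0 PNm0] : projM LD m0 = m0 /\ projN LD m0 = 0.
  by apply: proj_uniq; rewrite ?addr0 //; apply: (sublat0 HN).
have [PMn0 PNn0] : projM LD n0 = 0 /\ projN LD n0 = n0.
  by apply: proj_uniq; rewrite ?add0r //; apply: (sublat0 HM).
have [PMmn PNmn] : projM LD (m0 + n0) = m0 /\ projN LD (m0 + n0) = n0 by apply: proj_uniq.
exists (rank_two_op (f \o projM LD) (g \o projN LD) a b); split=> //; rewrite /rank_two_op /=.
- apply/le_anti; rewrite -{1}ab_1 S_le /=.
  have mn_1 : `|m0 + n0| <= 1 by rewrite (norm_decomp LD) // m0_1 n0_1 maxxx.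
  have := opnorm_ub S_bl mn_1; rewrite /rank_two_op /= PMmn PNmn fm0 gn0.
  by rewrite m0_1 n0_1 !scale1r ab_1.
- by rewrite PMm0 PNm0 fm0 m0_1 g0 scale1r scale0r addr0.
- by rewrite PMn0 PNn0 gn0 n0_1 f0 scale1r scale0r add0r.
Qed.

Lemma positive_op_norm_lt1 (T : X -> Y) m1 n1 n0 (eps : R) :
  bounded_linear T -> positive_op leX leY T -> opnorm T <= 1 ->
  M m1 -> N n1 -> N n0 -> leX 0 n0 -> `|m1| <= 1 -> `|n1| <= eps -> `|n0| <= 1 ->
  eps < 1 -> T n0 != 0 -> `|T (m1 + n1)| < 1.
Proof.
move=> T_bl T_pos T_le1 Mm1 Nn1 Nn0 n0_ge0 m1_le n1_le n0_le eps_lt1 Tn0.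
have [T_lin _] := T_bl.
pose w := absv HX m1 + absv HX n1; pose v := w + (1 - eps) *: n0.
have v_le1 : `|v| <= 1.
  have Nn : N (absv HX n1 + (1 - eps) *: n0).
    exact: (sublatD HN (sublat_absv HN HX Nn1) (sublatZ HN _ Nn0)).
  rewrite /v /w -addrA (norm_decomp LD (sublat_absv HM HX Mm1) Nn).
  rewrite ge_max norm_absv m1_le /=.
  rewrite (le_trans (ler_normD _ _)) // norm_absv normrZ ger0_norm; first nra.
  by rewrite subr_ge0 ltW.
have Tuw : `|T (m1 + n1)| <= `|T w|.
  apply: (positive_op_norm_le HX HY T_lin T_pos).
    exact: (bl_add HX (absv_ge HX m1) (absv_ge HX n1)).
  by rewrite opprD; apply: (bl_add HX (absv_geN HX m1) (absv_geN HX n1)).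
have Twv : `|T w| < `|T v|.
  rewrite /v [T (w + _)](linD T_lin) (linZ T_lin); apply: SMY.
  - by apply: T_pos; apply: (bl_add_ge0 HX (absv_ge0 HX m1) (absv_ge0 HX n1)).
  - by apply: (bl_scale_ge0 HY _ (T_pos _ n0_ge0)); rewrite subr_ge0 ltW.
  - move/eqP; rewrite scaler_eq0 (negbTE Tn0) orbF subr_eq0 => /eqP eps1.
    by rewrite eps1 ltxx in eps_lt1.
have := opnorm_ub T_bl v_le1; lra.
Qed.

Lemma approximant_norm_lt1 S T u0 m0 n0 (eps : R) :
  M m0 -> N n0 -> leX 0 n0 -> `|n0| = 1 -> bounded_linear S ->
  bounded_linear T -> positive_op leX leY T -> opnorm T = 1 ->
  `|u0| = 1 -> `|u0 - m0| < eps -> opnorm (fun x => T x - S x) < eps ->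
  eps < 1 -> eps <= `|S n0| -> `|T u0| < 1.
Proof.
move=> Mm0 Nn0 n0_ge0 n0_1 S_bl T_bl T_pos T_1 u0_1 u0m0 TS_lt eps_lt1 Sn0.
have [Mm1 Nn1 u0E] := proj_spec LD u0.
rewrite u0E; apply: (positive_op_norm_lt1 (n0 := n0) (eps := eps) T_bl T_pos) => //.
- by rewrite T_1.
- by rewrite -u0_1 norm_projM_le.
- apply: ltW; apply: le_lt_trans u0m0.
  by rewrite {2}u0E addrAC (norm_decomp LD (sublatB HM Mm1 Mm0) Nn1) le_max lexx orbT.
- by rewrite n0_1.
- apply/eqP => Tn0; have n0_le1 : `|n0| <= 1 by rewrite n0_1.
  have := le_lt_trans (opnorm_ub (bounded_linearB T_bl S_bl) n0_le1) TS_lt.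
  by rewrite Tn0 sub0r normrN; lra.
Qed.

End UniformMonotonicity.

Unset Implicit Arguments.

Theorem proposition4p3 (R : realType)
  (X : completeNormedModType R) (leX : X -> X -> Prop)
  (M N : set X)
  (Y : completeNormedModType R) (leY : Y -> Y -> Prop) :
  is_banach_lattice leX ->
  is_banach_sublattice leX M -> is_banach_sublattice leX N ->
  (exists m, M m /\ m <> 0) -> (exists n, N n /\ n <> 0) ->
  linfty_direct_sum M N ->
  positive_projections leX M N ->
  is_banach_lattice leY ->
  strictly_monotone leY ->
  BPBp_positive leX leY ->
  uniformly_monotone leY.
Proof.
move=> HX HM HN [m [Mm m_neq0]] [n [Nn n_neq0]] LD PP HY SMY BPB.
have [m0 [Mm0 m0_ge0 m0_1]] := sublat_unit_ge0 HM HX Mm m_neq0.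
have [n0 [Nn0 n0_ge0 n0_1]] := sublat_unit_ge0 HN HX Nn n_neq0.
apply: contrapT => /(not_uniformly_monotone_witness HY)[eps eps01 witness].
have [eta [eta_bds BPB_eta]] := BPB eps eps01.
have [a [b [a_ge0 b_ge0 ab_1 a_big b_big]]] := witness eta eta_bds.
have [S [S_bl S_pos S_1 Sm0 Sn0]] := exists_norm_one_positive_op
  HX HY HM HN LD PP Mm0 Nn0 m0_ge0 n0_ge0 m0_1 n0_1 a_ge0 b_ge0 ab_1.
have Sm0_big : 1 - eta < `|S m0| by rewrite Sm0.
have [u0 [T [u0_1 [T_bl [T_pos [T_1 [Tu0 [u0m0 TS]]]]]]]] :=
  BPB_eta S m0 S_bl S_pos S_1 m0_1 Sm0_big.
have Sn0_big : eps <= `|S n0| by rewrite Sn0.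
have := approximant_norm_lt1 HX HY HM HN LD SMY Mm0 Nn0 n0_ge0 n0_1 S_bl
  T_bl T_pos T_1 u0_1 u0m0 TS (proj2 (andP eps01)) Sn0_big.
by rewrite Tu0 ltxx.
Qed.
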